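(* Let $G$ be a $k$-degenerate graph with maximum degree $\Delta(G)$ and let $H$ be an $l$-degenerate graph. Then $AT(G+_Q H)\le \max\{2\Delta(G)-2,\,k+l\}+1$.
   Context: A graph is $k$-degenerate if its vertices can be successively deleted so that each deleted vertex has degree at most $k$ at the time of deletion. For an orientation $D$, a subdigraph is Eulerian if every vertex has equal in- and outdegree in it; $D$ is an AT-orientation if the numbers of Eulerian subgraphs with an even and with an odd number of arcs differ; $AT(G)$ is the smallest $k$ such that $G$ has an AT-orientation of maximum outdegree at most $k-1$. $Q(G)$ has vertex set $V(G)\cup E(G)$: it is $S(G)$ (each edge $e=xy$ replaced by the path $x\,e\,y$) plus edges $ee'$ whenever edges $e,e'$ are adjacent in $G$. $G+_Q H$ has vertex set $(V(G)\cup E(G))\times V(H)$, with $(u_1,u_2)\sim(v_1,v_2)$ iff [$u_1=v_1\in V(G)$ and $u_2v_2\in E(H)$] or [$u_2=v_2$ and $u_1v_1\in E(Q(G))$]. *)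

(* Finite simple graphs are symmetric irreflexive relations on a finType. *)
From mathcomp Require Import all_boot all_order.
Set Implicit Arguments. Unset Strict Implicit. Unset Printing Implicit Defensive.

Section Graphs.
Variable T : finType.

(* k-degenerate: vertices can be deleted one by one (in increasing order of the
   injective rank r), each having at most k neighbours still present when deleted. *)
Definition degenerate (g : rel T) (k : nat) : Prop :=
  exists r : T -> nat, injective r /\
    forall x, #|[set y | g x y & r x < r y]| <= k.

Definition maxdeg (g : rel T) : nat := \max_(x : T) #|[set y | g x y]|.

Definition outdeg (A : {set T * T}) (x : T) : nat := #|[set y | (x, y) \in A]|.
Definition indeg (A : {set T * T}) (x : T) : nat := #|[set y | (y, x) \in A]|.

Definition is_orientation (g : rel T) (D : {set T * T}) : bool :=
  [forall x, forall y, ((x, y) \in D) ==> g x y] &&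
  [forall x, forall y, g x y ==> (((x, y) \in D) (+) ((y, x) \in D))].

Definition eulerian (D A : {set T * T}) : bool :=
  (A \subset D) && [forall x, outdeg A x == indeg A x].

Definition num_even_eulerian (D : {set T * T}) : nat :=
  #|[set A : {set T * T} | eulerian D A & ~~ odd #|A|]|.
Definition num_odd_eulerian (D : {set T * T}) : nat :=
  #|[set A : {set T * T} | eulerian D A & odd #|A|]|.

Definition AT_orientation (D : {set T * T}) : bool :=
  num_even_eulerian D != num_odd_eulerian D.

Definition has_AT_orientation_below (g : rel T) (k : nat) : bool :=
  [exists D : {set T * T},
     [&& is_orientation g D, AT_orientation D & [forall x, outdeg D x < k]]].

(* AT(g): the smallest such k.  Acyclic orientations are AT-orientations with
   outdegree < #|T|, so the minimum lies in [0, #|T|] and this search finds it. *)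
Definition AT (g : rel T) : nat :=
  find (has_AT_orientation_below g) (iota 0 #|T|.+1).

End Graphs.

Section QProduct.
Variables V W : finType.

Definition edges (g : rel V) : {set {set V}} :=
  [set E : {set V} | [exists x, exists y, g x y && (E == [set x; y])]].

Definition edge_of (g : rel V) := {E : {set V} | E \in edges g}.

(* Q(G): vertex set V(G) ⊔ E(G); S(G) plus adjacency of adjacent edges *)
Definition Qadj (g : rel V) : rel (V + edge_of g) :=
  fun u v => match u, v with
  | inl x, inr e => x \in val e
  | inr e, inl x => x \in val e
  | inr e, inr e' => (e != e') && (val e :&: val e' != set0)
  | inl _, inl _ => false
  end.

Definition is_vertex (g : rel V) (u : V + edge_of g) : bool :=
  if u is inl _ then true else false.

Definition Qprod (g : rel V) (h : rel W) : rel ((V + edge_of g) * W) :=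
  fun u v => [&& u.1 == v.1, is_vertex u.1 & h u.2 v.2]
          || ((u.2 == v.2) && Qadj u.1 v.1).

End QProduct.

(* A d-degenerate graph has AT <= d + 1: orienting every edge towards the later
   end of a degeneracy order gives an acyclic orientation, whose only Eulerian
   subgraph is the empty one.  So it suffices to show that G +_Q H is
   max(2 Delta - 2, k + l)-degenerate, i.e. that every nonempty vertex set S has
   a vertex of small degree in S.  If S contains no vertex of the form (x, w)
   with x in V(G), an edge-vertex (e, w) has only the other edges at the two ends
   of e as neighbours, at most 2 Delta - 2.  Otherwise take the layer w0 whose
   H-rank is least among such vertices, and in it the G-vertex z of least G-rank
   that occurs (as itself or as an end of an edge-vertex).  Then (z, w0), or the
   other end (y, w0) of an edge zy, or the edge-vertex (zy, w0) has at most
   l + k, resp. 2 Delta - 2, neighbours in S. *)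
From mathcomp Require Import all_boot all_order zify.
Set Implicit Arguments. Unset Strict Implicit. Unset Printing Implicit Defensive.

Section Degenerate.
Variable T : finType.
Implicit Types (g : rel T) (D A : {set T * T}) (r : T -> nat).

Definition rank_orientation g r : {set T * T} :=
  [set p | g p.1 p.2 & r p.1 < r p.2].

Definition ranked D r := forall p, p \in D -> r p.1 < r p.2.

(* An arc leaving the r-minimal vertex of positive outdegree would have to
   enter an even smaller such vertex. *)
Lemma eulerian_ranked_eq0 D A r : ranked D r -> eulerian D A -> A = set0.
Proof.
move=> rD /andP[/subsetP AD /forallP balanced]; apply/setP=> -[x y].
rewrite inE; apply/negbTE/negP=> xyA.
have out_x : 0 < outdeg A x by apply/card_gt0P; exists y; rewrite inE.
case: (@arg_minnP _ x (fun z => 0 < outdeg A z) r out_x) => x0 out_x0 min_x0.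
move: out_x0; rewrite (eqP (balanced x0)) => /card_gt0P[z]; rewrite inE => zA.
have out_z : 0 < outdeg A z by apply/card_gt0P; exists x0; rewrite inE.
by have := min_x0 _ out_z; rewrite leqNgt (rD _ (AD _ zA)).
Qed.

Lemma eulerian0 D : eulerian D set0.
Proof.
rewrite /eulerian sub0set; apply/forallP=> x.
by rewrite /outdeg /indeg !(eq_card (B := pred0)) // => y; rewrite !inE.
Qed.

Lemma AT_orientation_ranked D r : ranked D r -> AT_orientation D.
Proof.
move=> rD; rewrite /AT_orientation /num_even_eulerian /num_odd_eulerian.
have eq0 A : eulerian D A = (A == set0).
  by apply/idP/eqP=> [/(eulerian_ranked_eq0 rD) | ->]; last exact: eulerian0.
have -> : [set A | eulerian D A & ~~ odd #|A|] = [set set0].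
  by apply/setP=> A; rewrite !inE eq0; case: eqP => // ->; rewrite cards0.
have -> : [set A | eulerian D A & odd #|A|] = set0.
  by apply/setP=> A; rewrite !inE eq0; case: eqP => // ->; rewrite cards0.
by rewrite cards1 cards0.
Qed.

Lemma rank_orientation_is_orientation g r :
  symmetric g -> irreflexive g -> injective r ->
  is_orientation g (rank_orientation g r).
Proof.
move=> g_sym g_irr r_inj; apply/andP; split; apply/forallP=> x; apply/forallP=> y.
  by rewrite inE; apply/implyP=> /andP[].
apply/implyP=> gxy; rewrite !inE /= gxy g_sym gxy /=.
have : r x != r y.
  by apply: contraTneq gxy => /r_inj ->; rewrite g_irr.
by case: ltngtP.
Qed.

Lemma AT_le g n : has_AT_orientation_below g n -> AT g <= n.
Proof.
move=> gn; rewrite /AT; case: (leqP n #|T|) => n_le; last first.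
  by apply: leq_trans (find_size _ _) _; rewrite size_iota.
rewrite leqNgt; apply/negP=> /(before_find 0).
by rewrite nth_iota // add0n gn.
Qed.

Lemma AT_degenerate g d :
  symmetric g -> irreflexive g -> degenerate g d -> AT g <= d.+1.
Proof.
move=> g_sym g_irr [r [r_inj r_deg]]; apply: AT_le.
apply/existsP; exists (rank_orientation g r); apply/and3P; split.
- exact: rank_orientation_is_orientation.
- by apply: (@AT_orientation_ranked _ r) => p; rewrite inE => /andP[].
- apply/forallP=> x; rewrite ltnS; apply: leq_trans (r_deg x).
  by apply: subset_leq_card; apply/subsetP=> y; rewrite !inE.
Qed.

Lemma degenerate_of_subsets g d :
  (forall S : {set T}, S != set0 -> exists2 x, x \in S & #|[set y in S | g x y]| <= d) ->
  degenerate g d.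
Proof.
move=> low.
suff ranked_on n (S : {set T}) : #|S| <= n -> exists r : T -> nat, injective r /\
    forall x, x \in S -> #|[set y in S | g x y & r x < r y]| <= d.
  have [r [r_inj r_deg]] := ranked_on _ [set: T] (leqnn _).
  exists r; split=> // x; apply: leq_trans (r_deg x (in_setT x)).
  by apply: subset_leq_card; apply/subsetP=> y; rewrite !inE.
have rank0 : exists r : T -> nat, injective r.
  by exists (fun x => val (enum_rank x)) => a b /val_inj/enum_rank_inj.
elim: n S => [|n IH] S S_n; have [->|S_n0] := eqVneq S set0;
  try by have [r r_inj] := rank0; exists r; split=> // x; rewrite inE.
  by move: S_n; rewrite leqn0 cards_eq0 (negbTE S_n0).
case: (low S S_n0) => x0 x0S x0_deg.
move: S_n; rewrite (cardsD1 x0) x0S ltnS => /IH[r [r_inj r_deg]].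
exists (fun y => if y == x0 then 0 else (r y).+1); split.
  by move=> a b; do 2!case: eqP => [->|?] //; move=> [/r_inj].
move=> x xS; case: eqP => [->|x_x0].
  apply: leq_trans x0_deg; apply: subset_leq_card; apply/subsetP=> y.
  by rewrite !inE => /and3P[-> ->].
apply: leq_trans (r_deg x _); last by rewrite !inE xS andbT; apply/eqP.
apply: subset_leq_card; apply/subsetP=> y; rewrite !inE.
by case: eqP => [_|y_x0] /and3P[-> ->]; rewrite ?ltn0 ?andbF // ltnS => ->.
Qed.

End Degenerate.

Section QprodGraph.
Variables (V W : finType) (g : rel V) (h : rel W).

Lemma Qprod_sym : symmetric h -> symmetric (@Qprod V W g h).
Proof.
move=> h_sym [a w] [b w']; rewrite /Qprod /= h_sym (eq_sym w).
case: a b => [x|e] [y|e'] /=; rewrite ?(eq_sym (inl x)) ?(eq_sym (inr e)) //.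
by rewrite (eq_sym e) setIC.
Qed.

Lemma Qprod_irr : irreflexive h -> irreflexive (@Qprod V W g h).
Proof. by move=> h_irr [[x|e] w]; rewrite /Qprod /= ?h_irr !eqxx ?andbF. Qed.

Hypotheses (g_sym : symmetric g) (g_irr : irreflexive g).

Lemma edge_of_pair (e : edge_of g) : exists a b, g a b /\ val e = [set a; b].
Proof.
have := valP e; rewrite inE => /existsP[a /existsP[b /andP[gab /eqP ->]]].
by exists a, b.
Qed.

Lemma edge_of_at (e : edge_of g) x :
  x \in val e -> exists y, g x y /\ val e = [set x; y].
Proof.
case: (edge_of_pair e) => a [b [gab ->]]; rewrite !inE => /orP[]/eqP->.
  by exists b.
by exists a; rewrite g_sym // setUC.
Qed.

Lemma card_edges_at_le x (P : pred (edge_of g)) (Q : pred V) :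
  (forall e, P e -> x \in val e -> forall y, y != x -> y \in val e -> Q y) ->
  #|[set e | P e & x \in val e]| <= #|[set y | g x y & Q y]|.
Proof.
move=> PQ; have [->|[e0 _]] := set_0Vmem [set e | P e & x \in val e].
  by rewrite cards0.
pose edge_to y := insubd e0 [set x; y].
apply: leq_trans (leq_imset_card edge_to _).
apply: subset_leq_card; apply/subsetP=> e; rewrite inE => /andP[Pe xe].
case: (edge_of_at xe) => y [gxy ey].
have yx : y != x by apply: contraTneq gxy => ->; rewrite g_irr.
have ye : y \in val e by rewrite ey !inE eqxx orbT.
apply/imsetP; exists y; first by rewrite inE gxy (PQ e).
by apply: val_inj; rewrite /edge_to insubdK // -ey; apply: valP.
Qed.

Lemma card_edges_at_maxdeg x (P : pred (edge_of g)) :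
  #|[set e | P e & x \in val e]| <= maxdeg g.
Proof.
apply: leq_trans (card_edges_at_le (Q := predT) _) _ => //.
apply: leq_trans (leq_bigmax_cond (F := fun x => #|[set y | g x y]|) x isT).
by apply: subset_leq_card; apply/subsetP=> y; rewrite !inE andbT.
Qed.

Variable S : {set (V + edge_of g) * W}.

Definition Qnbr_in u := [set v in S | @Qprod V W g h u v].

Definition layer_edges w x := [set e | (inr e, w) \in S & x \in val e].

Lemma card_Qnbr_vertex x w :
  #|Qnbr_in (inl x, w)| <= #|[set w' | h w w' & (inl x, w') \in S]|
                          + #|layer_edges w x|.
Proof.
apply: leq_trans (leq_trans _ (leq_card_setU
   ((fun w' => (inl x, w')) @: [set w' | h w w' & (inl x, w') \in S])
   ((fun e => (inr e, w)) @: layer_edges w x))) _; last first.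
  by apply: leq_add; apply: leq_imset_card.
apply: subset_leq_card; apply/subsetP=> -[[x'|e] w']; rewrite !inE /Qprod /=.
  case/andP=> x'S /orP[/andP[/eqP[->] hww'] | /andP[_ //]].
  by apply/orP; left; apply/imsetP; exists w'; rewrite // inE hww'.
case/and3P=> eS /eqP ww' xe; subst w'.
by apply/orP; right; apply/imsetP; exists e; rewrite // inE eS.
Qed.

(* [e] itself lies in both [layer_edges w a] and [layer_edges w b], hence the [.-1]. *)
Lemma card_Qnbr_edge e w a b : (inr e, w) \in S -> val e = [set a; b] ->
  #|Qnbr_in (inr e, w)| <= #|[set x | x \in val e & (inl x, w) \in S]|
    + (#|layer_edges w a|.-1 + #|layer_edges w b|.-1).
Proof.
move=> eS ev.
have eEa : e \in layer_edges w a by rewrite inE eS ev !inE eqxx.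
have eEb : e \in layer_edges w b by rewrite inE eS ev !inE eqxx orbT.
rewrite (cardsD1 e (layer_edges w a)) (cardsD1 e (layer_edges w b)) eEa eEb /=.
apply: leq_trans (leq_trans _ (leq_card_setU
   ((fun x => (inl x, w)) @: [set x | x \in val e & (inl x, w) \in S])
   ((fun e => (inr e, w)) @: ((layer_edges w a :\ e) :|: (layer_edges w b :\ e)))))
   _; last first.
  apply: leq_add; first exact: leq_imset_card.
  by apply: leq_trans (leq_imset_card _ _) _; apply: leq_card_setU.
apply: subset_leq_card; apply/subsetP=> -[[x|e'] w']; rewrite !inE /Qprod /=.
  case/and3P=> xS /eqP ww' xe; subst w'.
  by apply/orP; left; apply/imsetP; exists x; rewrite // inE xe.
case/andP=> e'S /orP[/andP[//] | /and3P[/eqP ww' ne' /set0Pn[c]]]; subst w'.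
rewrite inE ev !inE => /andP[/orP[]/eqP-> ce'];
  by apply/orP; right; apply/imsetP; exists e'; rewrite // !inE eq_sym ne' e'S ce' ?orbT.
Qed.

Lemma card_Qnbr_isolated_edge e w : (inr e, w) \in S ->
  {in val e, forall x, (inl x, w) \notin S} -> #|Qnbr_in (inr e, w)| <= 2 * maxdeg g - 2.
Proof.
move=> eS ends_out; case: (edge_of_pair e) => a [b [_ ev]].
apply: leq_trans (card_Qnbr_edge eS ev) _.
have -> : #|[set x | x \in val e & (inl x, w) \in S]| = 0.
  apply/eqP; rewrite cards_eq0; apply/eqP/setP=> x; rewrite !inE.
  by apply/negbTE/andP=> -[/ends_out/negP].
have := card_edges_at_maxdeg a (fun e => (inr e, w) \in S).
have := card_edges_at_maxdeg b (fun e => (inr e, w) \in S).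
rewrite -!/(layer_edges _ _); lia.
Qed.

Hypothesis h_irr : irreflexive h.
Variables (k l : nat) (rG : V -> nat) (rH : W -> nat).
Hypotheses (rG_inj : injective rG) (rG_deg : forall x, #|[set y | g x y & rG x < rG y]| <= k).
Hypotheses (rH_inj : injective rH) (rH_deg : forall w, #|[set w' | h w w' & rH w < rH w']| <= l).

Lemma card_Qnbr_min_layer x w0 :
  (forall x' w', (inl x', w') \in S -> rH w0 <= rH w') ->
  #|Qnbr_in (inl x, w0)| <= l + #|layer_edges w0 x|.
Proof.
move=> w0_min; apply: leq_trans (card_Qnbr_vertex x w0) _; rewrite leq_add2r.
apply: leq_trans (rH_deg w0); apply: subset_leq_card; apply/subsetP=> w'.
rewrite !inE => /andP[hw' xw'S]; rewrite hw' ltn_neqAle (w0_min x) // andbT.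
by apply: contraTneq hw' => /rH_inj ->; rewrite h_irr.
Qed.

Lemma card_layer_edges_min w z :
  (forall e y, (inr e, w) \in S -> z \in val e -> y \in val e -> rG z <= rG y) ->
  #|layer_edges w z| <= k.
Proof.
move=> z_min; apply: leq_trans (rG_deg z); apply: card_edges_at_le => e eS ze y yz ye.
by rewrite ltn_neqAle (z_min e) // andbT; apply: contra yz => /eqP/rG_inj ->.
Qed.

Lemma Qprod_low_degree_in : S != set0 ->
  exists2 u, u \in S & #|Qnbr_in u| <= maxn (2 * maxdeg g - 2) (k + l).
Proof.
move=> S_n0; pose vertex_in (p : V * W) := (inl p.1, p.2) \in S.
have [[x w] xwS|no_vertex] := pickP vertex_in; last first.
  case/set0Pn: S_n0 => -[[x|e] w] uS.
    by have := no_vertex (x, w); rewrite /vertex_in uS.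
  exists (inr e, w) => //; apply: leq_trans (leq_maxl _ (k + l)).
  apply: card_Qnbr_isolated_edge => // x' _; apply/negP=> x'S.
  by have := no_vertex (x', w); rewrite /vertex_in x'S.
case: (@arg_minnP _ (x, w) vertex_in (fun p => rH p.2) xwS) => -[xs w0] xsS w0_min.
have {}w0_min x' w' : (inl x', w') \in S -> rH w0 <= rH w'.
  by move=> x'S; apply: (w0_min (x', w')).
pose in_layer z := ((inl z, w0) \in S) || [exists e, ((inr e, w0) \in S) && (z \in val e)].
have xs_layer : in_layer xs by rewrite /in_layer -[_ \in S]/(vertex_in (xs, w0)) xsS.
case: (@arg_minnP _ xs in_layer rG xs_layer) => z z_layer z_min.
have z_edges : #|layer_edges w0 z| <= k.
  apply: card_layer_edges_min => e y eS ze ye; apply: z_min.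
  by rewrite /in_layer; apply/orP; right; apply/existsP; exists e; rewrite eS.
have [zS|zS] := boolP ((inl z, w0) \in S).
  by exists (inl z, w0) => //; apply: leq_trans (card_Qnbr_min_layer _ w0_min) _; lia.
move: z_layer; rewrite /in_layer (negbTE zS) => /existsP[e /andP[eS ze]].
case: (edge_of_at ze) => y [gzy ev].
have y_edges := card_edges_at_maxdeg y (fun e => (inr e, w0) \in S).
rewrite -/(layer_edges _ _) in y_edges.
have [yS|yS] := boolP ((inl y, w0) \in S); last first.
  exists (inr e, w0) => //; apply: leq_trans (leq_maxl _ (k + l)).
  by apply: card_Qnbr_isolated_edge => // x'; rewrite ev !inE => /orP[]/eqP->.
have [D_le_k|k_lt_D] := leqP (maxdeg g) k.
  by exists (inl y, w0) => //; apply: leq_trans (card_Qnbr_min_layer _ w0_min) _; lia.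
exists (inr e, w0) => //; apply: leq_trans (card_Qnbr_edge eS ev) _.
have ends_in : #|[set x | x \in val e & (inl x, w0) \in S]| <= 1.
  rewrite -(cards1 y); apply: subset_leq_card; apply/subsetP=> v.
  by rewrite !inE ev !inE => /andP[/orP[]/eqP-> //]; rewrite (negbTE zS).
have z_edge : 0 < #|layer_edges w0 z| by apply/card_gt0P; exists e; rewrite inE eS.
lia.
Qed.

End QprodGraph.

Theorem corollary3p8 (V W : finType) (g : rel V) (h : rel W)
  (g_sym : symmetric g) (g_irr : irreflexive g)
  (h_sym : symmetric h) (h_irr : irreflexive h)
  (k l : nat) (Gdeg : degenerate g k) (Hdeg : degenerate h l) :
  AT (@Qprod V W g h) <= maxn (2 * maxdeg g - 2) (k + l) + 1.
Proof.
rewrite addn1; apply: AT_degenerate; [exact: Qprod_sym | exact: Qprod_irr |].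
case: Gdeg => rG [rG_inj rG_deg]; case: Hdeg => rH [rH_inj rH_deg].
apply: degenerate_of_subsets => S S_n0.
exact: (Qprod_low_degree_in g_sym g_irr h_irr rG_inj rG_deg rH_inj rH_deg S_n0).
Qed.
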